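(* $NPO(3)=6$.
   Context: All graphs are finite, simple and undirected; $A(G)$ denotes the adjacency matrix of $G$. Eigenvalues are counted with multiplicity. For a positive integer $k$, $NPO(k)$ is the smallest integer $n$ such that the adjacency matrix of every graph with at least $n$ vertices has at least $k$ nonpositive eigenvalues. *)

(* Eigenvalues are taken over algC (algebraically closed, characteristic 0). *)
From HB Require Import structures.
From mathcomp Require Import all_boot all_order all_algebra all_field.
Set Implicit Arguments. Unset Strict Implicit. Unset Printing Implicit Defensive.
Import Order.TTheory GRing.Theory Num.Theory.
Local Open Scope ring_scope.

Definition simple_graph (n : nat) (e : rel 'I_n) : Prop :=
  symmetric e /\ irreflexive e.

Definition adj_mx (n : nat) (e : rel 'I_n) : 'M[algC]_n :=
  \matrix_(i, j) (e i j)%:R.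

Definition eigenvalues_mset (n : nat) (A : 'M[algC]_n) (rs : seq algC) : Prop :=
  char_poly A = \prod_(z <- rs) ('X - z%:P).

Definition at_least_nonpos_eig (k : nat) (n : nat) (A : 'M[algC]_n) : Prop :=
  exists rs : seq algC, eigenvalues_mset A rs /\ (k <= count (fun z : algC => (z <= 0)%R) rs)%N.

Definition NPO_prop (k n : nat) : Prop :=
  forall (m : nat) (e : rel 'I_m), (n <= m)%N -> simple_graph e ->
    at_least_nonpos_eig k (adj_mx e).

Definition NPO_is (k n : nat) : Prop :=
  NPO_prop k n /\ forall n' : nat, NPO_prop k n' -> (n <= n')%N.

From HB Require Import structures.
From mathcomp Require Import all_boot all_order all_algebra all_field.
From mathcomp Require Import ring.
Set Implicit Arguments. Unset Strict Implicit. Unset Printing Implicit Defensive.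
Import Order.TTheory GRing.Theory Num.Theory.

(* Upper bound.  Every graph G on at least six vertices has at least three
   nonpositive eigenvalues.  By a finite search over the 2^15 graphs on six
   vertices, G contains an induced copy H of one of eight graphs on four
   vertices.  For each of these eight graphs an explicit integer certificate
   exhibits a 3-dimensional subspace of C^4 on which the quadratic form of
   A(H) is nonpositive (a 3x4 matrix W with W A(H) W^* diagonal and
   nonpositive, together with a right inverse showing that W has rank 3).
   Pushing W forward along the inclusion of H into G gives a 3-dimensional
   subspace on which the form of A(G) is nonpositive, and the Courant-Fischer
   argument (via the spectral theorem for Hermitian matrices) then yields
   three nonpositive eigenvalues of A(G).

   Lower bound.  The 5-cycle C5 satisfies A^3 = A^2 + 3A - 2, so its
   eigenvalues are 2 and the roots of z^2 + z - 1; together with trace A = 0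
   this leaves room for at most two nonpositive eigenvalues. *)

Definition edge_rel (E : seq (nat * nat)) (i j : nat) : bool :=
  ((i, j) \in E) || ((j, i) \in E).

(* A graph on the vertices 0..3 together with the data certifying that its
   adjacency form is nonpositive on a 3-dimensional space: the rows of the
   3x4 matrix [cert_basis] span that space, [cert_basis * cert_inverse] is
   [cert_scale] times the identity, and [cert_basis * A * cert_basis^T] is
   the diagonal matrix with diagonal [cert_form]. *)
Record certificate := Certificate {
  cert_pattern : seq (nat * nat);
  cert_basis : seq (seq int);
  cert_inverse : seq (seq int);
  cert_scale : int;
  cert_form : seq int }.

(* The eight unavoidable induced subgraphs on four vertices: the empty graph,
   one edge, a path on three vertices, the star K(1,3), K4 minus an edge, K4,
   a triangle, and the 4-cycle, each with its certificate. *)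
Definition certificate_of (p : nat) : certificate :=
  match p with
  | 0 => Certificate [::]
           [:: [:: 1; 0; 0; 0]; [:: 0; 1; 0; 0]; [:: 0; 0; 1; 0]]%Z
           [:: [:: 1; 0; 0]; [:: 0; 1; 0]; [:: 0; 0; 1]; [:: 0; 0; 0]]%Z 1%Z [:: 0; 0; 0]%Z
  | 1 => Certificate [:: (0,1)]
           [:: [:: 1; 0; 0; 0]; [:: 0; 0; 1; 0]; [:: 0; 0; 0; 1]]%Z
           [:: [:: 1; 0; 0]; [:: 0; 0; 0]; [:: 0; 1; 0]; [:: 0; 0; 1]]%Z 1%Z [:: 0; 0; 0]%Z
  | 2 => Certificate [:: (0,1); (0,2)]
           [:: [:: 1; 0; 0; 0]; [:: 0; 0; 0; 1]; [:: 0; 1; -1; 0]]%Z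
           [:: [:: 1; 0; 0]; [:: 0; 0; 1]; [:: 0; 0; 0]; [:: 0; 1; 0]]%Z 1%Z [:: 0; 0; 0]%Z
  | 3 => Certificate [:: (0,1); (0,2); (0,3)]
           [:: [:: 1; 0; 0; 0]; [:: 0; 1; 0; -1]; [:: 0; 0; 1; -1]]%Z
           [:: [:: 1; 0; 0]; [:: 0; 1; 0]; [:: 0; 0; 1]; [:: 0; 0; 0]]%Z 1%Z [:: 0; 0; 0]%Z
  | 4 => Certificate [:: (0,1); (0,2); (0,3); (1,2); (1,3)]
           [:: [:: 1; 0; 0; 0]; [:: 0; 1; 0; -1]; [:: 0; 0; 1; -1]]%Z
           [:: [:: 1; 0; 0]; [:: 0; 1; 0]; [:: 0; 0; 1]; [:: 0; 0; 0]]%Z 1%Z [:: 0; -2; 0]%Z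
  | 5 => Certificate [:: (0,1); (0,2); (0,3); (1,2); (1,3); (2,3)]
           [:: [:: 1; 0; 0; 0]; [:: 0; 1; 0; -1]; [:: 0; 1; -2; 1]]%Z
           [:: [:: 2; 0; 0]; [:: 0; 2; 0]; [:: 0; 1; -1]; [:: 0; 0; 0]]%Z 2%Z [:: 0; -2; -6]%Z
  | 6 => Certificate [:: (0,1); (0,2); (1,2)]
           [:: [:: 1; 0; 0; 0]; [:: 0; 0; 0; 1]; [:: 0; 1; -1; 0]]%Z
           [:: [:: 1; 0; 0]; [:: 0; 0; 1]; [:: 0; 0; 0]; [:: 0; 1; 0]]%Z 1%Z [:: 0; 0; -2]%Z
  | _ => Certificate [:: (0,1); (0,2); (1,3); (2,3)]
           [:: [:: 1; 0; 0; 0]; [:: 0; 0; 0; 1]; [:: 0; 1; -1; 0]]%Z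
           [:: [:: 1; 0; 0]; [:: 0; 0; 1]; [:: 0; 0; 0]; [:: 0; 1; 0]]%Z 1%Z [:: 0; 0; 0]%Z
  end.

Definition pattern_graph (p : nat) : rel 'I_4 :=
  fun k l => edge_rel (cert_pattern (certificate_of p)) k l.

Definition induced m k (e : rel 'I_m) (f : 'I_k -> 'I_m) : rel 'I_k :=
  fun i j => e (f i) (f j).

Lemma induced_simple m k (e : rel 'I_m) (f : 'I_k -> 'I_m) :
  simple_graph e -> simple_graph (induced e f).
Proof. by move=> [esym eirr]; split=> [i j|i]; [apply: esym | apply: eirr]. Qed.

(* A graph on {0..5} is encoded by the mask of its edges
   among the 15 pairs [pairs6]; the check runs over all masks, all injective
   4-tuples of vertices and all patterns, and is evaluated by [vm_compute].
   [lazy_all] and [lazy_has] are versions of [all] and [has] that stop at the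
   first decisive element under call-by-value evaluation. *)

Definition pairs6 : seq (nat * nat) :=
  [seq p <- [seq (i, j) | i <- iota 0 6, j <- iota 0 6] | p.1 < p.2].

Fixpoint words (n k : nat) : seq (seq nat) :=
  if k is k'.+1 then [seq x :: w | x <- iota 0 n, w <- words n k'] else [:: [::]].

Definition injective_tuples : seq (seq nat) := Eval vm_compute in [seq t <- words 6 4 | uniq t].

Fixpoint lazy_all (T : Type) (a : T -> bool) (s : seq T) : bool :=
  if s is x :: s' then (if a x then lazy_all a s' else false) else true.

Fixpoint lazy_has (T : Type) (a : T -> bool) (s : seq T) : bool :=
  if s is x :: s' then (if a x then true else lazy_has a s') else false.

Definition table (adj : nat -> nat -> bool) (n : nat) : seq (seq bool) :=
  [seq [seq adj i j | j <- iota 0 n] | i <- iota 0 n].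

Definition entry (T : seq (seq bool)) (i j : nat) : bool := nth false (nth [::] T i) j.

Definition pattern_tables : seq (seq (seq bool)) :=
  Eval vm_compute in [seq table (edge_rel (cert_pattern (certificate_of p))) 4 | p <- iota 0 8].

Definition induces (T : seq (seq bool)) (t : seq nat) (p : nat) : bool :=
  lazy_all (fun k => lazy_all (fun l =>
    entry T (nth 0 t k) (nth 0 t l) == entry (nth [::] pattern_tables p) k l)
    (iota 0 4)) (iota 0 4).

Definition has_pattern (T : seq (seq bool)) : bool :=
  lazy_has (fun t => lazy_has (induces T t) (iota 0 8)) injective_tuples.

Definition mask_has_pattern (s : seq bool) : bool :=
  has_pattern (table (edge_rel (mask s pairs6)) 6).

(* [all_masks n acc] checks [mask_has_pattern (catrev s acc)] for all s of size n. *)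
Fixpoint all_masks (n : nat) (acc : seq bool) : bool :=
  if n is n'.+1 then (if all_masks n' (true :: acc) then all_masks n' (false :: acc) else false)
  else mask_has_pattern acc.

Lemma all_masks_ok : all_masks 15 [::].
Proof. by vm_compute. Qed.

Lemma lazy_allE (T : Type) (a : T -> bool) s : lazy_all a s = all a s.
Proof. by elim: s => //= x s ->; case: (a x). Qed.

Lemma lazy_hasE (T : Type) (a : T -> bool) s : lazy_has a s = has a s.
Proof. by elim: s => //= x s ->; case: (a x). Qed.

Lemma entry_table (adj : nat -> nat -> bool) n i j :
  i < n -> j < n -> entry (table adj n) i j = adj i j.
Proof.
move=> lt_i lt_j.
by rewrite /entry /table (nth_map 0) ?size_iota // (nth_map 0) ?size_iota // !nth_iota.
Qed.

Lemma pattern_tablesE p : p < 8 ->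
  nth [::] pattern_tables p = table (edge_rel (cert_pattern (certificate_of p))) 4.
Proof. by do 8?[case: p => [|p] //]. Qed.

Lemma inducesP T t p : induces T t p -> forall k l, k < 4 -> l < 4 ->
  entry T (nth 0 t k) (nth 0 t l) = entry (nth [::] pattern_tables p) k l.
Proof.
rewrite /induces lazy_allE => /allP induces_t k l lt_k lt_l.
have := induces_t k; rewrite mem_iota leq0n add0n lt_k lazy_allE => /(_ isT) /allP /(_ l).
by rewrite mem_iota leq0n add0n lt_l => /(_ isT) /eqP.
Qed.

Lemma injective_tuplesP t : t \in injective_tuples -> [/\ uniq t, size t = 4 & all (gtn 6) t].
Proof.
have : all (fun t => [&& uniq t, size t == 4 & all (gtn 6) t]) injective_tuples by vm_compute.
by move=> /allP /[apply] /and3P [? /eqP ? ?].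
Qed.

Lemma all_masks_spec n acc : all_masks n acc ->
  forall s, size s = n -> mask_has_pattern (catrev s acc).
Proof.
elim: n acc => [|n IH] acc.
  by move=> ok [|b s] size_s; [exact: ok | discriminate size_s].
rewrite [all_masks _ _]/=; case ok_true: (all_masks n (true :: acc)); last by move=> F; discriminate F.
move=> ok_false [|b s] size_s; first by discriminate size_s.
case: size_s => size_s.
by case: b; [apply: IH ok_true s size_s | apply: IH ok_false s size_s].
Qed.

Lemma every_mask_has_pattern s : size s = 15 -> mask_has_pattern s.
Proof.
move=> size_s; have := all_masks_spec all_masks_ok (s := rev s).
by rewrite size_rev size_s catrevE revK cats0; apply.
Qed.

Lemma pairs6_total i j : i < 6 -> j < 6 -> i != j -> ((i, j) \in pairs6) || ((j, i) \in pairs6).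
Proof.
move=> lt_i lt_j neq_ij.
by rewrite !mem_filter !allpairs_f ?mem_iota ?lt_i ?lt_j // !andbT -neq_ltn.
Qed.

Lemma edge_rel_encoding (E : nat -> nat -> bool) i j :
  (forall i j, E i j = E j i) -> (forall i, E i i = false) -> i < 6 -> j < 6 ->
  edge_rel (mask [seq E p.1 p.2 | p <- pairs6] pairs6) i j = E i j.
Proof.
move=> Esym Eirr lt_i lt_j.
rewrite -filter_mask /edge_rel !(@mem_filter _ (fun p : nat * nat => E p.1 p.2)) /= (Esym j i).
by have [->|neq_ij] := eqVneq i j; rewrite ?Eirr // -andb_orr pairs6_total // andbT.
Qed.

Theorem six_vertices_induce_pattern (e : rel 'I_6) : simple_graph e ->
  exists p (f : 'I_4 -> 'I_6), [/\ p < 8, injective f & induced e f =2 pattern_graph p].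
Proof.
move=> [esym eirr]; pose E i j := e (inord i) (inord j).
have Esym i j : E i j = E j i by apply: esym.
have Eirr i : E i i = false by apply: eirr.
have := @every_mask_has_pattern [seq E ij.1 ij.2 | ij <- pairs6]; rewrite size_map => /(_ erefl).
rewrite /mask_has_pattern /has_pattern lazy_hasE => /hasP [t /injective_tuplesP [t_uniq t_size t_lt6]].
rewrite lazy_hasE => /hasP [p]; rewrite mem_iota add0n => /andP [_ p8] /inducesP t_induces.
have t_lt (k : 'I_4) : nth 0 t k < 6 by apply: (allP t_lt6); rewrite mem_nth // t_size.
exists p, (fun k => inord (nth 0 t k)); split => // [k l | k l].
  move/(congr1 val); rewrite /= !inordK ?t_lt // => /eqP.
  by rewrite nth_uniq ?t_size // => /eqP /val_inj.
have := t_induces k l (ltn_ord k) (ltn_ord l).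
by rewrite (pattern_tablesE p8) !entry_table ?t_lt // (edge_rel_encoding Esym Eirr) ?t_lt.
Qed.

Local Open Scope ring_scope.
Local Open Scope sesquilinear_scope.

Definition qform (C : numClosedFieldType) n (A : 'M[C]_n) (x : 'rV[C]_n) : C :=
  (x *m A *m x^t*) 0 0.

Definition nonpos_on (C : numClosedFieldType) k n (A : 'M[C]_n) (V : 'M[C]_(k, n)) : Prop :=
  forall c : 'rV_k, qform A (c *m V) <= 0.

Lemma qformM (C : numClosedFieldType) m n (A : 'M[C]_n) (M : 'M[C]_(m, n)) (x : 'rV_m) :
  qform A (x *m M) = qform (M *m A *m M^t*) x.
Proof. by rewrite /qform trmx_mul map_mxM !mulmxA. Qed.

Lemma qform_diag (C : numClosedFieldType) n (d x : 'rV[C]_n) :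
  qform (diag_mx d) x = \sum_i d 0 i * (x 0 i * (x 0 i)^*).
Proof.
rewrite /qform mul_mx_diag !mxE; apply: eq_bigr => i _.
by rewrite !mxE mulrAC mulrC.
Qed.

Lemma qform_diag_gt0 (C : numClosedFieldType) n (d y : 'rV[C]_n) :
  (forall i, d 0 i \is Num.real) -> (forall i, d 0 i <= 0 -> y 0 i = 0) -> y != 0 ->
  0 < qform (diag_mx d) y.
Proof.
move=> dreal yS ynz; rewrite qform_diag.
have [i0 yi0] : exists i0, y 0 i0 != 0.
  apply/existsP; apply: contraR ynz; rewrite negb_exists => /forallP y0.
  by apply/eqP/rowP => i; rewrite mxE; apply/eqP; rewrite -[_ == _]negbK y0.
have di0 : 0 < d 0 i0 by rewrite real_ltNge ?dreal //; apply: contra yi0 => /yS ->.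
rewrite (bigD1 i0) //=; apply: ltr_wpDr; last by rewrite mulr_gt0 ?mul_conjC_gt0.
apply: sumr_ge0 => i _; have [/yS ->|dpos] := boolP (d 0 i <= 0).
  by rewrite mul0r mulr0.
by rewrite mulr_ge0 ?mul_conjC_ge0 // ltW // real_ltNge ?dreal.
Qed.

Lemma nonpos_on_diag (C : numClosedFieldType) k n (A : 'M[C]_n) (W : 'M[C]_(k, n))
    (g : 'rV[C]_k) :
  W *m A *m W^t* = diag_mx g -> (forall i, g 0 i <= 0) -> nonpos_on A W.
Proof.
move=> WAW gle c; rewrite qformM WAW qform_diag; apply: sumr_le0 => i _.
by rewrite mulr_le0_ge0 ?mul_conjC_ge0.
Qed.

Lemma char_poly_conj (R : comUnitRingType) n (P D : 'M[R]_n) : P \in unitmx ->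
  char_poly (invmx P *m D *m P) = char_poly D.
Proof.
move=> Pu; rewrite /char_poly /char_poly_mx !map_mxM.
set Q := map_mx polyC (invmx P); set P' := map_mx polyC P.
have QP : Q *m P' = 1%:M by rewrite -map_mxM mulVmx // map_mx1.
have PQ : P' *m Q = 1%:M by rewrite -map_mxM mulmxV // map_mx1.
have -> : 'X%:M - Q *m map_mx polyC D *m P' = Q *m ('X%:M - map_mx polyC D) *m P'.
  by rewrite mulmxBr mulmxBl scalar_mxC -[_ *m Q *m P']mulmxA QP mulmx1.
by rewrite !det_mulmx mulrC mulrA -det_mulmx PQ det1 mul1r.
Qed.

Lemma exists_vanishing_combination (F : fieldType) k n (B : 'M[F]_(k, n)) (S : {set 'I_n}) :
  (#|S| < k)%N -> exists2 v : 'rV_k, v != 0 & forall i, i \in S -> (v *m B) 0 i = 0.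
Proof.
move=> small; set M := \matrix_(i < k, j < #|S|) B i (enum_val j).
have : kermx M != 0.
  by rewrite -mxrank_eq0 mxrank_ker subn_eq0 -ltnNge (leq_ltn_trans (rank_leq_col M)).
case/rowV0Pn => v /sub_kermxP vM vnz; exists v => // i iS.
move/rowP: vM => /(_ (enum_rank_in iS i)); rewrite [RHS]mxE => <-.
by rewrite !mxE; apply: eq_bigr => l _; rewrite mxE enum_rankK_in.
Qed.

Lemma nonpos_eig_of_spectral n (A : 'M[algC]_n) k : A \is hermsymmx ->
  (k <= #|[set i | (spectral_diag A 0 i <= 0)%R]|)%N -> at_least_nonpos_eig k A.
Proof.
move=> Ah kS; set P := spectralmx A; set d := spectral_diag A.
have AE : A = invmx P *m diag_mx d *m P.
  exact/orthomx_spectralP/hermitian_normalmx.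
exists [seq d 0 i | i <- enum 'I_n]; split.
  rewrite /eigenvalues_mset AE char_poly_conj ?unitarymx_unit ?spectral_unitarymx //.
  rewrite char_poly_trig ?diag_mx_is_trig // big_map big_enum /=.
  by apply: eq_bigr => i _; rewrite mxE eqxx mulr1n.
by rewrite count_map enumT -size_filter; rewrite cardsE cardE in kS.
Qed.

Theorem courant_fischer k n (A : 'M[algC]_n) (V : 'M[algC]_(k, n)) :
  A \is hermsymmx -> row_free V -> nonpos_on A V -> at_least_nonpos_eig k A.
Proof.
move=> Ah Vfree Vnp; set P := spectralmx A; set d := spectral_diag A.
have PU : P \is unitarymx := spectral_unitarymx A.
have AE : A = P^t* *m diag_mx d *m P.
  by rewrite -invmx_unitary //; apply/orthomx_spectralP/hermitian_normalmx.
have Pfree : row_free (P^t*).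
  by apply/row_freeP; exists P; apply: mulmx1C; apply/unitarymxP.
apply: nonpos_eig_of_spectral => //; rewrite leqNgt; apply/negP => small.
have [v vnz vS] := exists_vanishing_combination (V *m P^t*) small.
have qA x : qform A x = qform (diag_mx d) (x *m P^t*) by rewrite qformM trmxCK -AE.
have := Vnp v; rewrite qA -mulmxA lt_geF //; apply: qform_diag_gt0.
- by move=> i; apply: (mxOverP (hermitian_spectral_diag_real Ah)).
- by move=> i di; rewrite vS // inE.
- by rewrite !mulmxA !mulmx_free_eq0.
Qed.

Definition select_mx {C : numClosedFieldType} k m (f : 'I_k -> 'I_m) : 'M[C]_(k, m) :=
  \matrix_(i, j) (j == f i)%:R.

Lemma select_mxM (C : numClosedFieldType) k m p (f : 'I_k -> 'I_m) (B : 'M[C]_(m, p)) :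
  select_mx f *m B = \matrix_(i, j) B (f i) j.
Proof.
apply/matrixP => i j; rewrite !mxE (bigD1 (f i)) //= mxE eqxx mul1r big1 ?addr0 //.
by move=> l /negPf lfi; rewrite mxE lfi mul0r.
Qed.

(* select_mx f has real entries, so its adjoint is its transpose. *)
Lemma select_mx_adjoint (C : numClosedFieldType) k m (f : 'I_k -> 'I_m) :
  (select_mx f)^t* = (select_mx f : 'M[C]_(k, m))^T.
Proof. by apply/matrixP => i j; rewrite !mxE conjC_nat. Qed.

Lemma mulmx_select_adjoint (C : numClosedFieldType) k m p (f : 'I_k -> 'I_m)
    (B : 'M[C]_(p, m)) :
  B *m (select_mx f)^t* = \matrix_(i, j) B i (f j).
Proof.
rewrite select_mx_adjoint -[B]trmxK -trmx_mul select_mxM.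
by apply/matrixP => i j; rewrite !mxE.
Qed.

Lemma select_mx_compress (C : numClosedFieldType) k m (f : 'I_k -> 'I_m) (B : 'M[C]_m) :
  select_mx f *m B *m (select_mx f)^t* = \matrix_(i, j) B (f i) (f j).
Proof. by rewrite mulmx_select_adjoint select_mxM; apply/matrixP => i j; rewrite !mxE. Qed.

Lemma select_mx_isometry (C : numClosedFieldType) k m (f : 'I_k -> 'I_m) :
  injective f -> select_mx f *m (select_mx f)^t* = 1%:M :> 'M[C]_k.
Proof.
move=> finj; have := select_mx_compress f (1%:M : 'M[C]_m); rewrite mulmx1 => ->.
by apply/matrixP => i j; rewrite !mxE (inj_eq finj).
Qed.

Lemma adj_mx_hermitian m (e : rel 'I_m) : simple_graph e -> adj_mx e \is hermsymmx.
Proof.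
move=> [esym _]; rewrite is_hermitianmxE expr0 scale1r; apply/eqP/matrixP => i j.
by rewrite !mxE conjC_nat esym.
Qed.

Theorem induced_nonpos_eig j k m (e : rel 'I_m) (f : 'I_k -> 'I_m) (W : 'M[algC]_(j, k)) :
  simple_graph e -> injective f -> row_free W -> nonpos_on (adj_mx (induced e f)) W ->
  at_least_nonpos_eig j (adj_mx e).
Proof.
move=> sg finj Wfree Wnp; apply: (courant_fischer (V := W *m select_mx f)).
- exact: adj_mx_hermitian.
- have [R WR] := row_freeP Wfree; apply/row_freeP; exists ((select_mx f)^t* *m R).
  by rewrite mulmxA -(mulmxA W) select_mx_isometry // mulmx1.
- move=> c; rewrite mulmxA qformM select_mx_compress.
  by have := Wnp c; congr (_ <= _); congr qform; apply/matrixP => a b; rewrite !mxE.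
Qed.

Lemma row_free_scaled_inverse (F : fieldType) k n (W : 'M[F]_(k, n)) (R : 'M[F]_(n, k)) a :
  a != 0 -> W *m R = a%:M -> row_free W.
Proof.
move=> anz WR; apply/row_freeP; exists (a^-1 *: R).
by rewrite -scalemxAr WR scale_scalar_mx mulVf.
Qed.

Definition int_mx r c (l : seq (seq int)) : 'M[algC]_(r, c) :=
  \matrix_(i, j) (nth 0 (nth [::] l i) j)%:~R.

Lemma certificate_valid p : (p < 8)%N ->
  let c := certificate_of p in let W := int_mx 3 4 (cert_basis c) in
  [/\ W *m int_mx 4 3 (cert_inverse c) = (cert_scale c)%:~R%:M,
      W *m adj_mx (pattern_graph p) *m W^t* = diag_mx (int_mx 1 3 [:: cert_form c]),
      cert_scale c != 0 & all (fun x => x <= 0) (cert_form c)].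
Proof.
move=> p8; do 8?[case: p p8 => [|p] p8 //]; split => //;
  apply/matrixP => i j; rewrite !mxE !big_ord_recr big_ord0 /= ?mxE ?big_ord_recr ?big_ord0 /=;
  case: i => [[|[|[|i]]] Hi] //; case: j => [[|[|[|j]]] Hj] //; rewrite /= ?mxE /= ?rmorph_int.
all: ring.
Qed.

Lemma pattern_nonpos_subspace p : (p < 8)%N ->
  exists2 W : 'M[algC]_(3, 4), row_free W & nonpos_on (adj_mx (pattern_graph p)) W.
Proof.
move=> /certificate_valid [WR WAW scale_nz form_le0].
exists (int_mx 3 4 (cert_basis (certificate_of p))).
  by apply: row_free_scaled_inverse WR; rewrite intr_eq0.
apply: nonpos_on_diag WAW _ => i; rewrite mxE lerz0.
have [lt_i|ge_i] := ltnP i (size (cert_form (certificate_of p))).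
  by apply: (allP form_le0); rewrite mem_nth.
by rewrite nth_default.
Qed.

Theorem at_least_three_nonpos m (e : rel 'I_m) :
  (6 <= m)%N -> simple_graph e -> at_least_nonpos_eig 3 (adj_mx e).
Proof.
move=> m6 sg; pose g : 'I_6 -> 'I_m := widen_ord m6.
have [p [f [p8 finj fE]]] := six_vertices_induce_pattern (induced_simple g sg).
have [W Wfree Wnp] := pattern_nonpos_subspace p8.
apply: (induced_nonpos_eig (f := g \o f) sg _ Wfree).
  by move=> k l /(congr1 val) /= /val_inj /finj.
have -> : adj_mx (induced e (g \o f)) = adj_mx (pattern_graph p).
  by apply/matrixP => k l; rewrite !mxE -fE.
exact: Wnp.
Qed.

Definition cycle5 : rel 'I_5 :=
  fun i j => (val j == i.+1 %% 5)%N || (val i == j.+1 %% 5)%N.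

Lemma cycle5_simple : simple_graph cycle5.
Proof. by split=> [i j|[[|[|[|[|[|i]]]]] Hi]]; rewrite /cycle5 // orbC. Qed.

Lemma cycle5_annihilator :
  horner_mx (adj_mx cycle5) (('X - 2%:P) * ('X ^+ 2 + 'X - 1)) = 0.
Proof.
rewrite !(rmorphM, rmorphB, rmorphD, rmorphXn, rmorph1, horner_mx_C) /= !horner_mx_X.
apply/matrixP => i j; rewrite -!mulmxE !mxE !big_ord_recr big_ord0 /= !mxE !big_ord_recr !big_ord0 /=.
case: i => [[|[|[|[|[|i]]]]] Hi] //; case: j => [[|[|[|[|[|j]]]]] Hj] //; rewrite /= ?mxE /=.
all: ring.
Qed.

Lemma char_root_annihilated (F : fieldType) n (A : 'M[F]_n.+1) (p : {poly F}) (z : F) :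
  horner_mx A p = 0 -> root (char_poly A) z -> root p z.
Proof. by move=> pA; rewrite -root_mxminpoly; apply: root_dvdp; apply: mxminpoly_min. Qed.

(* The roots of z^2 + z - 1 are real: otherwise z + z^* = -1 would force
   z z^* = -1 < 0. *)
Lemma golden_root_real (z : algC) : z ^+ 2 + z - 1 = 0 -> z \is Num.real.
Proof.
move=> hz; apply/CrealP.
have hzc : z^* ^+ 2 + z^* - 1 = 0.
  have := congr1 (fun x => x^*) hz.
  by rewrite /= !rmorphB !rmorphD !rmorphXn rmorph1 rmorph0.
have : (z^* - z) * (z + z^* + 1) = 0.
  have -> : (z^* - z) * (z + z^* + 1) = (z^* ^+ 2 + z^* - 1) - (z ^+ 2 + z - 1) by ring.
  by rewrite hz hzc subrr.
move/eqP; rewrite mulf_eq0 subr_eq0 => /orP [/eqP // | /eqP zsum].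
have : z * z^* = -1.
  have -> : z * z^* = z * (z + z^* + 1) - (z ^+ 2 + z - 1) - 1 by ring.
  by rewrite zsum hz mulr0 subr0 sub0r.
by move=> zz; have := mul_conjC_ge0 z; rewrite zz oppr_ge0 ler10.
Qed.

(* A root of z^2 + z - 1 is at most 2, and at most -3/2 when nonpositive. *)
Lemma golden_root_bound (z : algC) :
  z ^+ 2 + z - 1 = 0 -> 2%:R * z <= 4%:R - 7%:R * (z <= 0)%R%:R.
Proof.
move=> hz; rewrite -subr_ge0; have [zle|_] := boolP (z <= 0).
- have prod1 : (2%:R * z + 3%:R) * (2%:R * z - 1) = 1.
    have -> : (2%:R * z + 3%:R) * (2%:R * z - 1) = 4%:R * (z ^+ 2 + z - 1) + 1 :> algC by ring.
    by rewrite hz mulr0 add0r.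
  have neg : 2%:R * z - 1 < 0 by rewrite subr_lt0 (le_lt_trans _ ltr01) // pmulr_rle0.
  have : 0 < (2%:R * z + 3%:R) * (2%:R * z - 1) by rewrite prod1 ltr01.
  rewrite nmulr_lgt0 // => lt0.
  have -> : 4%:R - 7%:R * true%:R - 2%:R * z = - (2%:R * z + 3%:R) :> algC by rewrite /=; ring.
  by rewrite oppr_ge0 ltW.
- have zz : 0 <= z * z by have /CrealP {2}<- := golden_root_real hz; apply: mul_conjC_ge0.
  have -> : 4%:R - 7%:R * false%:R - 2%:R * z =
      2%:R + 2%:R * (z * z) - 2%:R * (z ^+ 2 + z - 1) :> algC by rewrite /=; ring.
  by rewrite hz mulr0 subr0; apply: addr_ge0 => //; apply: mulr_ge0.
Qed.

Lemma cycle5_eigen_bound (z : algC) :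
  root (char_poly (adj_mx cycle5)) z -> 2%:R * z <= 4%:R - 7%:R * (z <= 0)%R%:R.
Proof.
move=> /(char_root_annihilated cycle5_annihilator).
rewrite rootM root_XsubC => /orP [/eqP -> | golden].
  by rewrite lern0 mulr0 subr0 -natrM ler_nat.
by apply: golden_root_bound; move/rootP: golden; rewrite !hornerE.
Qed.

Lemma natr_count (R : pzSemiRingType) (T : Type) (P : pred T) (s : seq T) :
  \sum_(x <- s) (P x)%:R = (count P s)%:R :> R.
Proof. by elim: s => [|x s IH]; rewrite ?big_nil ?big_cons ?IH ?natrD. Qed.

(* Summing the bound over the five eigenvalues, whose sum is trace A = 0,
   gives 7 N <= 20 for the number N of nonpositive ones. *)
Theorem cycle5_few_nonpos : ~ at_least_nonpos_eig 3 (adj_mx cycle5).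
Proof.
move=> [rs [chA]]; rewrite /eigenvalues_mset in chA; set N := count _ rs => N3.
have size_rs : size rs = 5.
  by have := congr1 (fun p : {poly algC} => size p) chA; rewrite size_char_poly size_prod_XsubC => -[].
have sum0 : \sum_(z <- rs) z = 0.
  have := coefPn_prod_XsubC (ps := rs); rewrite size_rs -chA char_poly_trace //.
  have -> : \tr (adj_mx cycle5) = 0.
    by rewrite /mxtrace big1 // => i _; rewrite mxE (proj2 cycle5_simple).
  by move=> /(_ isT) /oppr_inj.
have : \sum_(z <- rs) 2%:R * z <= \sum_(z <- rs) (4%:R - 7%:R * (z <= 0)%R%:R : algC).
  rewrite big_seq_cond [X in _ <= X]big_seq_cond; apply: ler_sum => z /andP [zrs _].
  by apply: cycle5_eigen_bound; rewrite chA root_prod_XsubC.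
rewrite -mulr_sumr sum0 mulr0 sumrB -mulr_sumr natr_count big_const_seq count_predT size_rs.
rewrite subr_ge0 /= addr0 -!natrD -natrM ler_nat.
by apply/negP; rewrite -ltnNge (leq_trans _ (leq_mul (leqnn 7) N3)).
Qed.

Theorem mainTheorem6 : NPO_is 3 6.
Proof.
split.
  by move=> m e m6 sg; apply: at_least_three_nonpos.
move=> n npo_n; rewrite leqNgt; apply/negP => n_le5.
exact: cycle5_few_nonpos (npo_n 5 cycle5 n_le5 cycle5_simple).
Qed.
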